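(* Let $M=\{1,\dots,m\}$ with $m\ge2$, and $t_I=\sum_{i\in I}t_i$. The rational function $$\sum_{\substack{I\sqcup J=M\\ I,J\neq\emptyset}} t_I^{|I|-2}t_J^{|J|-2}-2t_M^{m-3}\left(\frac1{t_1}+\dots+\frac1{t_m}\right)$$ (sum over ordered pairs of disjoint nonempty subsets with union $M$) is a symmetric polynomial in $t_1,\dots,t_m$ which depends only on $t_M=t_1+\dots+t_m$, i.e. it equals $F(t_1+\dots+t_m)$ for some one-variable polynomial $F$. *)

From HB Require Import structures.
From mathcomp Require Import all_boot all_order all_algebra.
Set Implicit Arguments. Unset Strict Implicit. Unset Printing Implicit Defensive.
Import Order.TTheory GRing.Theory Num.Theory.
Local Open Scope ring_scope.

(* t_I = sum_{i in I} t_i, for t : 'I_m -> rat (indices 0..m-1 stand for 1..m). *)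
Definition tS (m : nat) (t : 'I_m -> rat) (I : {set 'I_m}) : rat :=
  \sum_(i in I) t i.

(* The sum over ordered pairs (I,J) with
   I \sqcup J = M, I,J nonempty is the sum over I with I <> set0, I <> setT,
   and J = ~: I. *)
Definition lemma4p2_expr (m : nat) (t : 'I_m -> rat) : rat :=
  \sum_(I : {set 'I_m} | (I != set0) && (I != setT))
     (tS t I) ^ (Posz #|I| - 2) * (tS t (~: I)) ^ (Posz #|~: I| - 2)
  - 2 * (tS t setT) ^ (Posz m - 3) * \sum_(i < m) (t i)^-1.

From HB Require Import structures.
From mathcomp Require Import all_boot all_order all_algebra.
From mathcomp Require Import zify ring.
Import Order.TTheory GRing.Theory Num.Theory.
Local Open Scope ring_scope.
Set Implicit Arguments. Unset Strict Implicit. Unset Printing Implicit Defensive.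

(* The sums  P(a,b) = sum_(I,J) t_I^(|I|-a) t_J^(|J|-b)  over ordered bipartitions
   satisfy t_M P(a+1,b+1) = P(a,b+1) + P(a+1,b) because t_M = t_I + t_J; hence
   t_M^3 P(2,2) = 4 P(1,0) + 2 t_M P(2,0).  The sums P(1,0) and P(2,0) are values at
   x = 0 of the Abel-type polynomial identities
     sum_(0 < I <= A) t_I^(|I|-1) (x + t_(A\I))^|A\I| = |A| (x + t_A)^(|A|-1),
     sum_(0 < I <= A) t_I^(|I|-2) (x + t_(A\I))^|A\I|
        = (x + t_A)^(|A|-1) sum_(i in A) 1/t_i - C(|A|,2) (x + t_A)^(|A|-2),
   proved by induction on A: both sides obey the same recursion under d/dx, and at
   x = -t_A the left side is a finite difference sum_I (-1)^|I| t_I^k, which vanishes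
   for k < |A|.  Altogether the expression equals -(m-2)(m-3) t_M^(m-4). *)

Lemma sum_subsets_D1 (T : finType) (V : nmodType) (A : {set T}) a (F : {set T} -> V) :
  a \in A ->
  \sum_(I : {set T} | I \subset A) F I = \sum_(I : {set T} | I \subset A :\ a) (F I + F (a |: I)).
Proof.
move=> aA; rewrite big_split /= (bigID (fun I : {set T} => a \in I)) /= addrC; congr (_ + _).
  by apply: eq_bigl => I; rewrite subsetD1.
rewrite (reindex_onto (fun I : {set T} => a |: I) (fun I => I :\ a)) /=; last first.
  by move=> I /andP[_ aI]; rewrite setD1K.
apply: eq_bigl => I; rewrite subsetD1 setU11 andbT subUset sub1set aA /=.
have [aI|aI] := boolP (a \in I); last by rewrite setU1K ?eqxx ?andbT.
by rewrite andbF; apply/negbTE/negP => /andP[_ /eqP eI]; move: aI; rewrite -eI setD11.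
Qed.

Lemma eq_deriv_horner (R : numDomainType) (p q : {poly R}) x :
  p^`() = q^`() -> p.[x] = q.[x] -> p = q.
Proof.
move=> dpq pqx; apply/eqP; rewrite -subr_eq0; apply/eqP.
have d0 : (p - q)^`() = 0 by rewrite derivB dpq subrr.
have const : p - q = ((p - q)`_0)%:P.
  apply/polyP => -[|i]; rewrite coefC //=.
  by move/(congr1 (coefp i))/eqP: d0; rewrite /= coef_deriv coef0 mulrn_eq0 => /eqP.
by rewrite const -[(p - q)`_0](hornerC _ x) -const hornerD hornerN pqx subrr.
Qed.

Lemma expfz_subn_mulXn (R : fieldType) (x : R) (a b e : nat) :
  (x != 0) || (e <= a)%N -> x ^ (a%:Z - e%:Z) * x ^+ b = x ^ ((a + b)%:Z - e%:Z).
Proof.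
case/orP => [x_neq0|le_ea]; first by rewrite exprnP -expfzDr // PoszD addrAC.
by rewrite !subzn ?(leq_trans le_ea (leq_addr _ _)) // -!exprnP -exprD addnBAC.
Qed.

Lemma sum_sum_setD1 (T : finType) (V : zmodType) (A : {set T}) (f : T -> V) :
  \sum_(j in A) \sum_(i in A :\ j) f i = (\sum_(i in A) f i) *+ #|A|.-1.
Proof.
rewrite (eq_bigr (fun j => \sum_(i in A) f i - f j)) => [|j jA]; last first.
  by rewrite (big_setD1 _ jA) /= addrC addrK.
rewrite sumrB sumr_const; have [->|[a aA]] := set_0Vmem A.
  by rewrite big_set0 !mul0rn subrr.
by rewrite (cardsD1 a A) aA add1n mulrSr addrK.
Qed.

Section AlternatingSums.

Variables (R : comPzRingType) (T : finType) (t : T -> R).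
Local Notation tsum I := (\sum_(i in I) t i).

Lemma tsum_subset (A I : {set T}) : I \subset A -> tsum A = tsum I + tsum (A :\: I).
Proof. by move=> sIA; rewrite (big_setID I) /= (setIidPr sIA). Qed.

Lemma alternating_subset_sum_pow (A : {set T}) k : (k < #|A|)%N ->
  \sum_(I : {set T} | I \subset A) (-1) ^+ #|I| * tsum I ^+ k = 0.
Proof.
move eA: #|A| => n; elim: n A eA k => [|n IHn] A cardA k ltkA //.
have [a aA] : {a | a \in A} by apply/sigW/set0Pn; rewrite -card_gt0 cardA.
have cardAa : #|A :\ a| = n by move: cardA; rewrite (cardsD1 a) aA => -[].
rewrite (sum_subsets_D1 _ aA).
transitivity (- \sum_(I : {set T} | I \subset A :\ a) \sum_(i < k)
    (-1) ^+ #|I| * tsum I ^+ (k - i.+1) * (t a ^+ i.+1 *+ 'C(k, i.+1))).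
  rewrite -sumrN; apply: eq_bigr => I; rewrite subsetD1 => /andP[_ aI].
  rewrite big_setU1 //= cardsU1 aI exprS mulN1r mulNr -mulrBr addrC exprDn.
  rewrite big_ord_recl subn0 expr0 mulr1 bin0 mulr1n opprD addrA subrr add0r.
  rewrite mulrN mulr_sumr; congr (- _); apply: eq_bigr => i _.
  by rewrite -mulrnAr mulrA.
rewrite exchange_big /= big1 ?oppr0 // => i _.
by rewrite -mulr_suml IHn ?mul0r //; have := ltn_ord i; lia.
Qed.

Lemma alternating_nonempty_subset_sum_pow (A : {set T}) k : (k < #|A|)%N ->
  \sum_(I : {set T} | (I \subset A) && (I != set0)) (-1) ^+ #|A :\: I| * tsum I ^+ k
  = - ((-1) ^+ #|A| * 0 ^+ k).
Proof.
move=> ltkA.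
transitivity ((-1) ^+ #|A| *
    \sum_(I : {set T} | (I \subset A) && (I != set0)) (-1) ^+ #|I| * tsum I ^+ k).
  rewrite mulr_sumr; apply: eq_bigr => I /andP[sIA _].
  by rewrite -(cardsID I A) (setIidPr sIA) exprD -mulrA mulrCA signrMK.
have := alternating_subset_sum_pow ltkA.
rewrite (bigD1 set0) ?sub0set //= cards0 big_set0 expr0 mul1r => /eqP.
by rewrite addrC addr_eq0 => /eqP ->; rewrite mulrN.
Qed.

End AlternatingSums.

Section AbelIdentities.

Variables (R : numFieldType) (T : finType) (t : T -> R).
Local Notation tsum I := (\sum_(i in I) t i).

(* The shift [c] is needed because differentiating moves one [t j] into it. *)
Definition abel_poly (g : {set T} -> R) (A : {set T}) (c : R) : {poly R} :=
  \sum_(I : {set T} | (I \subset A) && (I != set0))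
     (g I)%:P * ('X + (c + tsum (A :\: I))%:P) ^+ #|A :\: I|.

Lemma deriv_abel_poly g A c :
  (abel_poly g A c)^`() = \sum_(j in A) abel_poly g (A :\ j) (c + t j).
Proof.
rewrite /abel_poly raddf_sum /=.
transitivity (\sum_(I : {set T} | (I \subset A) && (I != set0)) \sum_(j in A :\: I)
    (g I)%:P * ('X + (c + t j + tsum ((A :\ j) :\: I))%:P) ^+ #|(A :\ j) :\: I|).
  apply: eq_bigr => I _; rewrite derivCE deriv_exp derivD derivX derivC addr0 mul1r.
  rewrite -sumr_const mulr_sumr; apply: eq_bigr => j jAI.
  have -> : (A :\ j) :\: I = (A :\: I) :\ j by rewrite !setDDl setUC.
  by rewrite -addrA -big_setD1 // (cardsD1 j (A :\: I)) jAI.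
rewrite (exchange_big_dep (fun j => j \in A)) /=; last by move=> I j _ /setDP[].
apply: eq_bigr => j jA; apply: eq_bigl => I.
by rewrite subsetD1 inE; case: (I \subset A); case: (I != set0); case: (j \in I).
Qed.

Lemma horner_abel_poly g A c :
  (abel_poly g A c).[- (c + tsum A)] =
  \sum_(I : {set T} | (I \subset A) && (I != set0)) g I * (- tsum I) ^+ #|A :\: I|.
Proof.
rewrite /abel_poly horner_sum; apply: eq_bigr => I /andP[sIA _].
rewrite hornerM hornerC horner_exp hornerD hornerX hornerC (tsum_subset t sIA).
by congr (_ * (_ ^+ _)); ring.
Qed.

Lemma abel_poly_eq g (r : {set T} -> {poly R}) :
  (forall A, (r A)^`() = \sum_(j in A) r (A :\ j)) ->
  (forall A, (r A).[0] =
     \sum_(I : {set T} | (I \subset A) && (I != set0)) g I * (- tsum I) ^+ #|A :\: I|) ->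
  forall A c, abel_poly g A c = r A \Po ('X + (c + tsum A)%:P).
Proof.
move=> r_deriv r_at0 A; elim: {A}_.+1 {-2}A (ltnSn #|A|) => // n IHn A ltAn c.
apply: (@eq_deriv_horner _ _ _ (- (c + tsum A))); last first.
  by rewrite horner_abel_poly horner_comp hornerD hornerX hornerC addNr r_at0.
rewrite deriv_abel_poly deriv_comp derivD derivX derivC addr0 mulr1 r_deriv.
rewrite raddf_sum /=; apply: eq_bigr => j jA.
rewrite IHn -?addrA -?big_setD1 //.
by move: ltAn; rewrite (cardsD1 j) jA.
Qed.

Lemma nonempty_subset_sum_powz (A : {set T}) (e : nat) : (0 < e <= #|A|)%N ->
  (forall I : {set T}, I \subset A -> I != set0 -> (tsum I != 0) || (e <= #|I|)%N) ->
  \sum_(I : {set T} | (I \subset A) && (I != set0))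
     tsum I ^ (#|I|%:Z - e%:Z) * (- tsum I) ^+ #|A :\: I|
  = - ((-1) ^+ #|A| * 0 ^+ (#|A| - e)).
Proof.
move=> /andP[e_gt0 le_eA] tsum_ok; rewrite -(alternating_nonempty_subset_sum_pow t); last first.
  by rewrite ltn_subrL e_gt0 (leq_trans e_gt0).
apply: eq_bigr => I /andP[sIA I_neq0].
have cardA : (#|I| + #|A :\: I|)%N = #|A| by rewrite -(cardsID I A) (setIidPr sIA).
by rewrite [(- tsum I) ^+ _]exprNn mulrCA expfz_subn_mulXn ?tsum_ok // cardA subzn.
Qed.

Lemma abel_identity_card A c :
  abel_poly (fun I => tsum I ^ (#|I|%:Z - 1)) A c
  = #|A|%:R *: ('X + (c + tsum A)%:P) ^+ #|A|.-1.
Proof.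
rewrite (@abel_poly_eq _ (fun A => #|A|%:R *: 'X^(#|A|.-1) : {poly R})) => [|{}A|{}A].
- by rewrite comp_polyZ rmorphXn /= comp_polyX.
- rewrite (eq_bigr (fun _ => (#|A|.-1)%:R *: 'X^(#|A|.-2))) => [|j jA]; last first.
    by rewrite (cardsD1 j A) jA.
  by rewrite sumr_const derivZ derivXn -!scaler_nat.
rewrite hornerZ hornerXn; have [->|A_neq0] := eqVneq A set0.
  by rewrite cards0 mul0r big_pred0 // => I; rewrite subset0 andbN.
rewrite nonempty_subset_sum_powz ?card_gt0 // => [|I _]; last by rewrite card_gt0 orbC => ->.
have -> : #|A| = (#|A|.-1).+1 by rewrite prednK // card_gt0.
by rewrite subn1 /= exprS; case: (#|A|.-1) => [|n]; rewrite ?expr0n /=; ring.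
Qed.

Lemma horner0_abel_poly_setT g : [set: T] != set0 ->
  (abel_poly g [set: T] 0).[0] =
  g [set: T] + \sum_(I : {set T} | (I != set0) && (I != setT)) g I * tsum (~: I) ^+ #|~: I|.
Proof.
move=> T_neq0; rewrite /abel_poly horner_sum (bigD1 setT) ?subxx //=.
rewrite setDv cards0 expr0 mulr1 hornerC; congr (_ + _).
apply: eq_big => [I|I _]; first by rewrite subsetT.
by rewrite hornerM hornerC horner_exp hornerD hornerX hornerC setTD !add0r.
Qed.

Hypothesis t_neq0 : forall i, t i != 0.

Lemma tsum_neq0_or_card (I : {set T}) (e : nat) :
  I != set0 -> (e <= 2)%N -> (tsum I != 0) || (e <= #|I|)%N.
Proof.
move=> I_neq0 le_e2; have [/eqP/cards1P[i ->]|card_neq1] := eqVneq #|I| 1%N.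
  by rewrite big_set1 t_neq0.
by move: I_neq0; rewrite -card_gt0 => card_gt0; apply/orP; right; lia.
Qed.

Lemma abel_identity_inv A c :
  abel_poly (fun I => tsum I ^ (#|I|%:Z - 2)) A c
  = (\sum_(i in A) (t i)^-1) *: ('X + (c + tsum A)%:P) ^+ #|A|.-1
    - 'C(#|A|, 2)%:R *: ('X + (c + tsum A)%:P) ^+ #|A|.-2.
Proof.
rewrite (@abel_poly_eq _ (fun A => (\sum_(i in A) (t i)^-1) *: 'X^(#|A|.-1)
                                     - 'C(#|A|, 2)%:R *: 'X^(#|A|.-2) : {poly R}))
  => [|{}A|{}A].
- by rewrite comp_polyB !comp_polyZ !rmorphXn /= comp_polyX.
- rewrite (eq_bigr (fun j => (\sum_(i in A :\ j) (t i)^-1) *: 'X^(#|A|.-2)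
                         - 'C(#|A|.-1, 2)%:R *: 'X^(#|A|.-2.-1))) => [|j jA]; last first.
    by rewrite (cardsD1 j A) jA.
  rewrite sumrB -scaler_suml sum_sum_setD1 sumr_const derivB !derivZ !derivXn.
  rewrite -!scalerMnr !scalerMnl -!mulrnA; congr (_ - (_ *+ _) *: _).
  by rewrite mulnC -subn2 -mul_bin_down mulnC.
rewrite hornerD hornerN !hornerZ !hornerXn; have [->|A_neq0] := eqVneq A set0.
  by rewrite cards0 big_set0 !mul0r subrr big_pred0 // => I; rewrite subset0 andbN.
have [/eqP/cards1P[a ->]|card_neq1] := eqVneq #|A| 1%N.
  rewrite cards1 big_set1 (big_pred1 [set a]) => [|I]; last first.
    rewrite subset1 /=; case: eqP => [->|_] /=; first by rewrite -card_gt0 cards1.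
    by case: (I == set0).
  by rewrite setDv cards0 cards1 big_set1 expr0 mulr1 mul0r subr0 exprN1.
have le2A : (2 <= #|A|)%N by move: A_neq0; rewrite -card_gt0; lia.
rewrite nonempty_subset_sum_powz // => [|I _ I_neq0]; last exact: tsum_neq0_or_card.
case: #|A| le2A => [|[|n]] //= _.
by case: n => [|n]; rewrite ?expr0n /= ?binn ?mulr0 ?subrr ?oppr0 //; ring.
Qed.

End AbelIdentities.

Section Bipartitions.

Variables (R : numFieldType) (T : finType) (t : T -> R).
Hypothesis t_neq0 : forall i, t i != 0.
Local Notation tsum I := (\sum_(i in I) t i).

Definition bisum (a b : nat) : R :=
  \sum_(I : {set T} | (I != set0) && (I != setT))
     tsum I ^ (#|I|%:Z - a%:Z) * tsum (~: I) ^ (#|~: I|%:Z - b%:Z).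

Lemma bisumC a b : bisum a b = bisum b a.
Proof.
rewrite /bisum (reindex_inj (@setC_inj T)) /=; apply: eq_big => [I|I _].
  by rewrite -[in X in X && _]setCT -[in X in _ && X]setC0 !(inj_eq (@setC_inj T)) andbC.
by rewrite setCK mulrC.
Qed.

Lemma bisum_rec a b : (a <= 1)%N -> (b <= 1)%N ->
  tsum [set: T] * bisum a.+1 b.+1 = bisum a b.+1 + bisum a.+1 b.
Proof.
move=> le_a1 le_b1; rewrite /bisum mulr_sumr -big_split /=.
apply: eq_bigr => I /andP[I_neq0 I_neqT].
have IC_neq0 : ~: I != set0 by rewrite -setCT (inj_eq (@setC_inj T)).
have shift (x : R) (n e : nat) : (x != 0) || (e.+1 <= n)%N ->
    x ^ (n%:Z - e.+1%:Z) * x = x ^ (n%:Z - e%:Z).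
  by move=> x_ok; rewrite -{2}(expr1 x) expfz_subn_mulXn //; congr (x ^ _); lia.
rewrite (tsum_subset t (subsetT I)) setTD mulrDl.
rewrite -(shift (tsum I) #|I| a) -?(shift (tsum (~: I)) #|~: I| b)
  ?tsum_neq0_or_card //; ring.
Qed.

Lemma bisum0E a : bisum a 0 =
  \sum_(I : {set T} | (I != set0) && (I != setT)) tsum I ^ (#|I|%:Z - a%:Z) * tsum (~: I) ^+ #|~: I|.
Proof. by apply: eq_bigr => I _; rewrite subr0. Qed.

Lemma bisum22_eq :
  tsum [set: T] ^+ 3 * bisum 2 2 = 4 * bisum 1 0 + 2 * tsum [set: T] * bisum 2 0.
Proof.
have P11 : tsum [set: T] * bisum 1 1 = 2 * bisum 1 0.
  by rewrite bisum_rec // bisumC; ring.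
have P21 : tsum [set: T] * bisum 2 1 = bisum 1 1 + bisum 2 0 by rewrite bisum_rec.
have P22 : tsum [set: T] * bisum 2 2 = 2 * bisum 2 1.
  by rewrite bisum_rec // [bisum 1 2]bisumC; ring.
transitivity (tsum [set: T] ^+ 2 * (tsum [set: T] * bisum 2 2)); first by ring.
rewrite P22; transitivity (2 * (tsum [set: T] * (tsum [set: T] * bisum 2 1))); first by ring.
by rewrite P21 mulrDr P11; ring.
Qed.

Lemma bisum10_eq : (0 < #|T|)%N ->
  bisum 1 0 = (#|T|.-1)%:R * tsum [set: T] ^+ #|T|.-1.
Proof.
move=> T_gt0; have T_neq0 : [set: T] != set0 by rewrite -card_gt0 cardsT.
have := congr1 (horner^~ 0) (abel_identity_card t [set: T] 0).
rewrite horner0_abel_poly_setT //= hornerZ horner_exp hornerD hornerX hornerC !add0r cardsT.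
rewrite -(bisum0E 1) subzn // subn1; case: #|T| T_gt0 => // k _ /=.
by rewrite -exprnP => /(canRL (addKr _)) ->; ring.
Qed.

Lemma bisum20_eq : (2 <= #|T|)%N ->
  bisum 2 0 = tsum [set: T] ^+ #|T|.-1 * \sum_i (t i)^-1
              - ('C(#|T|, 2)%:R + 1) * tsum [set: T] ^+ #|T|.-2.
Proof.
move=> le2T; have T_neq0 : [set: T] != set0 by rewrite -card_gt0 cardsT (ltnW le2T).
have := congr1 (horner^~ 0) (abel_identity_inv t_neq0 [set: T] 0).
rewrite horner0_abel_poly_setT //= hornerD hornerN !hornerZ !horner_exp hornerD hornerX.
rewrite hornerC !add0r cardsT (eq_bigl _ (fun i => (t i)^-1) (fun i => in_setT i)).
rewrite -(bisum0E 2) subzn // subn2 -exprnP => /(canRL (addKr _)) ->.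
by rewrite mulrC; ring.
Qed.

Lemma bisum22_closed : (2 <= #|T|)%N -> tsum [set: T] != 0 ->
  bisum 2 2 - 2 * tsum [set: T] ^ (#|T|%:Z - 3) * \sum_i (t i)^-1
  = - ((#|T| - 2) * (#|T| - 3))%:R * tsum [set: T] ^+ (#|T| - 4).
Proof.
move=> le2T s_neq0; apply: (mulfI (expf_neq0 3 s_neq0)).
rewrite mulrBr bisum22_eq bisum10_eq ?(ltnW le2T) // bisum20_eq //.
have -> : tsum [set: T] ^+ 3 * (2 * tsum [set: T] ^ (#|T|%:Z - 3) * \sum_i (t i)^-1)
          = 2 * tsum [set: T] ^+ #|T| * \sum_i (t i)^-1.
  transitivity (2 * (tsum [set: T] ^ (#|T|%:Z - 3%:Z) * tsum [set: T] ^+ 3) * \sum_i (t i)^-1).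
    by ring.
  by rewrite expfz_subn_mulXn ?s_neq0 // PoszD addrK.
have C2 : ('C(#|T|, 2) * 2 = #|T| * #|T|.-1)%N by rewrite mulnC -mul_bin_diag bin1.
case: #|T| le2T C2 => [|[|k]] // _ C2 /=; rewrite !subSS !subn0.
have -> : 'C(k.+2, 2)%:R = (k.+2 * k.+1)%:R / 2 :> R.
  by rewrite -[(_ * _)%N]C2 natrM mulfK ?pnatr_eq0.
case: k {C2} => [|[|k]]; rewrite ?subSS ?subn0 ?mul0n ?muln0 ?mulr0n ?oppr0 ?mul0r /=.
all: by rewrite ?exprS; field.
Qed.

End Bipartitions.

Theorem lemma4p2 (m : nat) (hm : (2 <= m)%N) :
  exists F : {poly rat},
    forall t : 'I_m -> rat,
      (forall i, t i != 0) -> tS t setT != 0 ->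
      lemma4p2_expr t = F.[tS t setT].
Proof.
exists ((- ((m - 2) * (m - 3))%:R) *: 'X^(m - 4)) => t t_neq0 s_neq0.
have le2T : (2 <= #|'I_m|)%N by rewrite card_ord.
have := bisum22_closed t_neq0 le2T s_neq0; rewrite card_ord hornerZ hornerXn => <-.
reflexivity.
Qed.
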